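(* Let $S$ be a finite set of states, $B\subseteq S$, $P_\pi$ the transition matrix of a finite Markov chain on $S$, and $0<\gamma_B<1$, $\gamma=1$. Let $\neg B_R$ be the set of states in rejecting bottom strongly connected components, $\neg B_{T,A}=S\setminus(B\cup\neg B_R)$, $X=B\cup\neg B_{T,A}$, $m=|B|$, $n'=|\neg B_{T,A}|$. Let $T$ be the restriction of $P_\pi$ to $X\times X$ (rows and columns ordered with $B$ first), and $$H=\begin{bmatrix}\gamma_B I_{m\times m}&\\&\gamma I_{n'\times n'}\end{bmatrix}T .$$ Let $(D_{(k)})_{k\ge0}$ be a sequence of vectors in $\mathbb{R}^{X}$ with $D_{(k+1)}=HD_{(k)}$ for all $k$ (e.g. the approximation error of dynamic-programming iterates for the surrogate reward restricted to $X$). Then there exist a constant $c\in(0,1)$ and a positive integer $N\le n'+1$ such that $\|D_{(k+N)}\|_\infty\le c\,\|D_{(k)}\|_\infty$ for all $k$.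
   Context: A strongly connected component (communicating class) of a finite Markov chain is a maximal set of mutually communicating states; a bottom strongly connected component (BSCC) is one with no outgoing transitions. A BSCC is rejecting if it contains no state of $B$, and accepting otherwise. *)

From HB Require Import structures.
From mathcomp Require Import all_boot all_order all_algebra.
Set Implicit Arguments. Unset Strict Implicit. Unset Printing Implicit Defensive.
Import Order.TTheory GRing.Theory Num.Theory.
Local Open Scope ring_scope.

Section MC.
Variables (R : realFieldType) (S : finType).

Definition stochastic (P : S -> S -> R) : Prop :=
  (forall x y, 0 <= P x y) /\ (forall x, \sum_(y : S) P x y = 1).

Definition trans_rel (P : S -> S -> R) : rel S := fun x y => 0 < P x y.
Definition reach (P : S -> S -> R) (x y : S) : bool := connect (trans_rel P) x y.

Definition scc (P : S -> S -> R) (x : S) : {set S} :=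
  [set y | reach P x y && reach P y x].

Definition closed_class (P : S -> S -> R) (C : {set S}) : bool :=
  [forall u in C, forall v, (0 < P u v) ==> (v \in C)].

(* states lying in a rejecting bottom SCC (one containing no state of B) *)
Definition negBR (P : S -> S -> R) (B : {set S}) : {set S} :=
  [set x | closed_class P (scc P x) && [disjoint scc P x & B]].

Definition negBTA (P : S -> S -> R) (B : {set S}) : {set S} :=
  ~: (B :|: negBR P B).

Definition Xset (P : S -> S -> R) (B : {set S}) : {set S} :=
  B :|: negBTA P B.

(* H = diag(gammaB I_m, gamma I_n') T, T = P restricted to X x X, gamma = 1;
   vectors in R^X are represented by functions S -> R, only values on X matter *)
Definition Hop (P : S -> S -> R) (B : {set S}) (gB : R) (D : S -> R) (x : S) : R :=
  (if x \in B then gB else 1) * \sum_(y in Xset P B) P x y * D y.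

Definition normX (P : S -> S -> R) (B : {set S}) (D : S -> R) : R :=
  \big[Num.max/0]_(x in Xset P B) `|D x|.

End MC.

From HB Require Import structures.
From mathcomp Require Import all_boot all_order all_algebra.
From mathcomp Require Import zify lra.

Set Implicit Arguments.
Unset Strict Implicit.
Unset Printing Implicit Defensive.
Import Order.TTheory GRing.Theory Num.Theory.
Local Open Scope ring_scope.

(* Let w_j := H^j 1, so that |D_(k+j)| <= w_j ||D_k|| on X. The values w_j
   lie in [0, 1] and decrease with j. Call a state of negBTA saturated at
   stage j if w_(j+1) = 1 there. Saturation shrinks with j, and as long as
   it is nonempty it shrinks strictly: otherwise the saturated states form a
   closed class inside negBTA, which would contain a bottom SCC disjoint
   from B, i.e. a state of negBR. Hence nothing is saturated at stage
   n' = |negBTA|, so w_(n'+1) < 1 on X; take c between its maximum and 1. *)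

Section ClosedClasses.
Variables (R : realFieldType) (S : finType) (P : S -> S -> R).

Lemma closed_class_reach (C : {set S}) x y :
  closed_class P C -> x \in C -> reach P x y -> y \in C.
Proof.
move=> /forall_inP closedC xC /connectP [p + ->].
elim: p x xC => [|z p IHp] x xC //= /andP [xz zp].
by apply: IHp zp; exact: (implyP (forallP (closedC x xC) z)).
Qed.

(* A state of C with the fewest reachable states has a closed SCC. *)
Lemma closed_class_bottom_scc (C : {set S}) x0 :
  closed_class P C -> x0 \in C ->
  exists2 z, z \in C & closed_class P (scc P z).
Proof.
move=> closedC x0C.
pose succs z := [set y | reach P z y].
have [z zC zmin] := arg_minnP (fun z => #|succs z|) x0C.
exists z => //; apply/forall_inP => u; rewrite inE => /andP [zu uz].
apply/forallP => v; apply/implyP => uv.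
have zv : reach P z v by apply: connect_trans zu (connect1 _).
have sub_vz : succs v \subset succs z.
  by apply/subsetP => y; rewrite !inE; exact: connect_trans zv.
have /eqP eq_vz : succs v == succs z.
  by rewrite eqEcard sub_vz zmin //; exact: closed_class_reach zv.
have : z \in succs v by rewrite eq_vz inE; exact: connect0.
by rewrite !inE zv => ->.
Qed.

Lemma closed_class_negBTA (B C : {set S}) :
  C \subset negBTA P B -> closed_class P C -> C = set0.
Proof.
move=> subC closedC; apply/setP => x0; rewrite inE; apply/negP => x0C.
have [z zC closed_scc] := closed_class_bottom_scc closedC x0C.
have scc_sub : scc P z \subset C.
  by apply/subsetP => y; rewrite inE => /andP [zy _]; exact: closed_class_reach zy.
have : z \notin negBR P B.
  by have := subsetP subC z zC; rewrite /negBTA setCU !inE => /andP [].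
rewrite inE closed_scc /= => /negP; apply.
apply: disjointWl (subset_trans scc_sub subC) _.
by rewrite disjoint_subset /negBTA setCU; apply/subsetP => y; rewrite !inE => /andP [].
Qed.

End ClosedClasses.

Section StochasticRows.
Variables (R : realFieldType) (S : finType) (P : S -> S -> R).
Hypothesis stochP : stochastic P.

Lemma sum_stochastic_le1 (g : S -> R) x :
  (forall y, g y <= 1) -> \sum_y P x y * g y <= 1.
Proof.
case: stochP => P_ge0 P_sum1 g_le1; rewrite -(P_sum1 x).
by apply: ler_sum => y _; rewrite ler_piMr.
Qed.

Lemma sum_stochastic_lt1 (g : S -> R) x y :
  (forall z, g z <= 1) -> 0 < P x y -> g y < 1 -> \sum_z P x z * g z < 1.
Proof.
case: stochP => P_ge0 P_sum1 g_le1 Pxy gy; rewrite -(P_sum1 x).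
rewrite (bigD1 y) // [X in _ < X](bigD1 y) //=.
by apply: ltr_leD; [rewrite gtr_pMr | apply: ler_sum => z _; rewrite ler_piMr].
Qed.

End StochasticRows.

Section Discounting.
Variables (R : realFieldType) (S : finType) (P : S -> S -> R) (B : {set S}) (gB : R).
Hypotheses (stochP : stochastic P) (gB_gt0 : 0 < gB) (gB_lt1 : gB < 1).

Local Notation X := (Xset P B).
Local Notation H := (Hop P B gB).

Let disc x : R := if x \in B then gB else 1.
Let restrX (f : S -> R) y : R := if y \in X then f y else 0.

Let disc_ge0 x : 0 <= disc x.
Proof. by rewrite /disc; case: ifP => // _; exact: ltW. Qed.

Let disc_le1 x : disc x <= 1.
Proof. by rewrite /disc; case: ifP => // _; exact: ltW. Qed.

Let Hop_restrX f x : H f x = disc x * \sum_y P x y * restrX f y.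
Proof.
rewrite /Hop big_mkcond /=; congr (_ * _); apply: eq_bigr => y _.
by rewrite /restrX; case: ifP; rewrite ?mulr0.
Qed.

Lemma Hop_le f g x : {in X, forall y, f y <= g y} -> H f x <= H g x.
Proof.
move=> le_fg; apply: ler_wpM2l; first exact: disc_ge0.
by apply: ler_sum => y yX; rewrite ler_wpM2l ?le_fg //; case: stochP.
Qed.

Lemma HopZr f a x : H (fun y => f y * a) x = H f x * a.
Proof.
by rewrite /Hop -mulrA mulr_suml; congr (_ * _); apply: eq_bigr => y _; rewrite mulrA.
Qed.

Lemma norm_Hop_le f x : `|H f x| <= H (fun y => `|f y|) x.
Proof.
rewrite /Hop normrM ger0_norm; last exact: disc_ge0.
apply: ler_wpM2l; first exact: disc_ge0.
apply: le_trans (ler_norm_sum _ _ _) _; apply: ler_sum => y _.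
by rewrite normrM ger0_norm //; case: stochP.
Qed.

Let restrX_bounds f y : (forall y, 0 <= f y <= 1) -> 0 <= restrX f y <= 1.
Proof. by move=> f01; rewrite /restrX; case: ifP => _; rewrite ?f01 ?lexx ?ler01. Qed.

Let sum_restrX_bounds f x :
  (forall y, 0 <= f y <= 1) -> 0 <= \sum_y P x y * restrX f y <= 1.
Proof.
move=> f01; rewrite sum_stochastic_le1 // ?andbT => [|y]; last first.
  by case/andP: (restrX_bounds y f01).
apply: sumr_ge0 => y _; case/andP: (restrX_bounds y f01) => fy_ge0 _.
by rewrite mulr_ge0 //; case: stochP.
Qed.

Lemma Hop_bounds f x : (forall y, 0 <= f y <= 1) -> 0 <= H f x <= 1.
Proof.
move=> /(sum_restrX_bounds x) /andP [s_ge0 s_le1].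
by rewrite Hop_restrX mulr_ge0 ?mulr_ile1 ?disc_ge0 ?disc_le1.
Qed.

Lemma Hop_lt1_B f x : (forall y, 0 <= f y <= 1) -> x \in B -> H f x < 1.
Proof.
move=> /(sum_restrX_bounds x) /andP [s_ge0 s_le1] xB.
by rewrite Hop_restrX /disc xB; apply: le_lt_trans gB_lt1; rewrite ler_piMr // ltW.
Qed.

Lemma Hop_lt1_succ f x y :
  (forall y, 0 <= f y <= 1) -> 0 < P x y -> (y \notin X) || (f y < 1) -> H f x < 1.
Proof.
move=> f01 Pxy fy_lt1; have /andP [s_ge0 _] := sum_restrX_bounds x f01.
have s_lt1 : \sum_z P x z * restrX f z < 1.
  apply: sum_stochastic_lt1 Pxy _ => // [z|].
    by case/andP: (restrX_bounds z f01).
  by rewrite /restrX; case: ifP fy_lt1 => //= _ _; exact: ltr01.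
by rewrite Hop_restrX; apply: le_lt_trans s_lt1; rewrite ler_piMl ?disc_le1.
Qed.

Definition Hpow_one (j : nat) : S -> R := iter j H (fun=> 1).

Lemma Hpow_one_bounds j x : 0 <= Hpow_one j x <= 1.
Proof.
elim: j x => [|j IHj] x; first by rewrite ler01 lexx.
exact: Hop_bounds.
Qed.

Lemma Hpow_one_decr j x : Hpow_one j.+1 x <= Hpow_one j x.
Proof.
elim: j x => [|j IHj] x; first by case/andP: (Hpow_one_bounds 1 x).
by apply: Hop_le => y _; exact: IHj.
Qed.

Definition saturated j := [set x in negBTA P B | Hpow_one j.+1 x == 1].

Lemma saturated_succ j x v :
  x \in saturated j.+1 -> 0 < P x v -> v \in saturated j.
Proof.
rewrite inE => /andP [_ /eqP w_x] Pxv; apply/negPn/negP => v_unsat.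
suff : Hpow_one j.+2 x < 1 by rewrite w_x ltxx.
apply: (Hop_lt1_succ (f := Hpow_one j.+1) _ Pxv) => [y|]; first exact: Hpow_one_bounds.
have [vX /= | //] := boolP (v \in X).
have [vB | vNB] := boolP (v \in B).
  by apply: Hop_lt1_B => // y; exact: Hpow_one_bounds.
rewrite lt_neqAle; case/andP: (Hpow_one_bounds j.+1 v) => _ ->; rewrite andbT.
apply: contra v_unsat => w_v; rewrite inE w_v andbT.
by move: vX; rewrite inE (negPf vNB).
Qed.

Lemma saturated_subset j : saturated j.+1 \subset saturated j.
Proof.
apply/subsetP => x; rewrite !inE => /andP [-> /eqP w_x] /=.
rewrite eq_le; case/andP: (Hpow_one_bounds j.+1 x) => _ -> /=.
by rewrite -w_x Hpow_one_decr.
Qed.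

Lemma closed_class_saturated j :
  saturated j.+1 = saturated j -> closed_class P (saturated j).
Proof.
move=> eq_sat; apply/forall_inP => x; rewrite -{1}eq_sat => x_sat.
by apply/forallP => v; apply/implyP; exact: saturated_succ.
Qed.

Lemma saturated_sub_negBTA j : saturated j \subset negBTA P B.
Proof. by apply/subsetP => x; rewrite inE => /andP []. Qed.

Lemma card_saturated j : (#|saturated j| <= #|negBTA P B| - j)%N.
Proof.
elim: j => [|j IHj]; first by rewrite subn0 subset_leq_card ?saturated_sub_negBTA.
have [eq_sat | neq_sat] := eqVneq (saturated j.+1) (saturated j).
  by rewrite eq_sat (closed_class_negBTA (saturated_sub_negBTA j)
    (closed_class_saturated eq_sat)) cards0.
have : (#|saturated j.+1| < #|saturated j|)%N.
  by apply: proper_card; rewrite properEneq neq_sat saturated_subset.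
lia.
Qed.

Lemma saturated_card_negBTA : saturated #|negBTA P B| = set0.
Proof.
by apply: cards0_eq; apply/eqP; rewrite -leqn0 -(subnn #|negBTA P B|) card_saturated.
Qed.

Lemma Hpow_one_lt1 x : x \in X -> Hpow_one #|negBTA P B|.+1 x < 1.
Proof.
move=> xX; have [xB | xNB] := boolP (x \in B).
  by apply: Hop_lt1_B => // y; exact: Hpow_one_bounds.
have : x \notin saturated #|negBTA P B| by rewrite saturated_card_negBTA inE.
rewrite inE lt_neqAle; case/andP: (Hpow_one_bounds #|negBTA P B|.+1 x) => _ ->.
by move: xX; rewrite !inE (negPf xNB) andbT /= => ->.
Qed.

Variable D : nat -> S -> R.
Hypothesis D_rec : forall k x, x \in X -> D k.+1 x = H (D k) x.

Lemma norm_D_le k j x :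
  x \in X -> `|D (k + j)%N x| <= Hpow_one j x * normX P B (D k).
Proof.
elim: j x => [|j IHj] x xX; first by rewrite addn0 mul1r; exact: le_bigmax_cond.
rewrite addnS D_rec //; apply: le_trans (norm_Hop_le _ _) _.
by rewrite -HopZr; apply: Hop_le => y yX; exact: IHj.
Qed.

End Discounting.

Theorem lemma3 (R : realFieldType) (S : finType) (B : {set S})
  (P : S -> S -> R) (gB : R) (D : nat -> S -> R) :
  stochastic P -> 0 < gB -> gB < 1 ->
  (forall k x, x \in Xset P B -> D k.+1 x = Hop P B gB (D k) x) ->
  exists (c : R) (N : nat),
    [/\ 0 < c, c < 1, (0 < N)%N, (N <= #|negBTA P B|.+1)%N &
      forall k, normX P B (D (k + N)%N) <= c * normX P B (D k)].
Proof.
move=> stochP gB_gt0 gB_lt1 D_rec; set n := #|negBTA P B|.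
pose m := \big[Num.max/0]_(x in Xset P B) Hpow_one P B gB n.+1 x.
have m_ge0 : 0 <= m by exact: bigmax_ge_id.
have m_lt1 : m < 1 by apply: bigmax_lt => // x xX; exact: Hpow_one_lt1.
exists ((1 + m) / 2), n.+1; split => //; try lra.
move=> k; have normX_ge0 : 0 <= normX P B (D k) by exact: bigmax_ge_id.
apply: bigmax_le => [|x xX]; first by rewrite mulr_ge0 //; lra.
apply: le_trans (norm_D_le stochP gB_gt0 D_rec k n.+1 xX) _.
have w_le_m : Hpow_one P B gB n.+1 x <= m by exact: le_bigmax_cond.
apply: ler_wpM2r => //; lra.
Qed.
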